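(* Consider a network as described in the context with $\Delta_{ij}>0$ for all $i\ne j$. Assume the similarity inequality $$\frac{\min_i\big(\theta_i/\max_{x\in S_i^{-1}([0,\theta_i])}\nabla S_i(x)\cdot f_i(x)\big)}{\max_i\big(\theta_i/\min_{x\in S_i^{-1}([0,\theta_i])}\nabla S_i(x)\cdot f_i(x)\big)}\ \ge\ 1-\frac{\min_{i\ne j}\Delta_{ij}}{\max_i\theta_i}.$$ Suppose the initial state satisfies $S_i(x_i(0))=0$ for all $i$. Then at the first spiking instant $t_1>0$ (the first positive instant at which some cell spikes), all cells spike, i.e. $I(t_1)=\{1,\dots,m\}$.
   Context: Network model. Fix an integer $m\ge 2$ (the number of units, or cells). For each $i\in\{1,\dots,m\}$ the following data are given. - $X_i$ is a compact finite-dimensional smooth manifold. - $f_i$ is a continuous vector field on $X_i$. - $S_i:X_i\to\mathbb R$ is a $C^1$ function, called the satisfaction level. - $\theta_i>0$ is a constant, called the goal. These are required to satisfy: there is $v_i>0$ with $\nabla S_i(x)\cdot f_i(x)>v_i$ for every $x\in X_i$ with $S_i(x)<\theta_i$. Real interaction weights $\Delta_{ij}$ are given for $i\ne j$. The global state $\mathbf x(t)=(x_1(t),\dots,x_m(t))\in\prod_i X_i$, $t\ge 0$, evolves as follows. Spiking instants $0\le t_0<t_1<\cdots$ are the instants at which at least one cell spikes. Between consecutive spiking instants each $x_i$ evolves independently by $dx_i/dt=f_i(x_i)$. At an instant $t_n$, write $S_j(x_j(t_n^-))=\lim_{t\to t_n^-}S_j(x_j(t))$. The coalition is $I(t_n)=\bigcup_{p\ge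 0}I_p(t_n)$, where: - $I_0(t_n)$ is the set of cells $i$ with $S_i(x_i(t_n^-))\ge\theta_i$; - for $p\ge1$, $I_p(t_n)$ is the set of cells $j\notin\bigcup_{k<p}I_k(t_n)$ with $S_j(x_j(t_n^-))+\sum_{k<p}\sum_{i\in I_k(t_n)}\Delta_{ij}\ge\theta_j$. The spiking instants are exactly the instants with $I_0(t_n)\neq\emptyset$, and the cells in $I(t_n)$ are said to spike at $t_n$. At $t_n$ the state jumps as follows: - for $j\in I(t_n)$, $x_j(t_n)$ is a point with $S_j(x_j(t_n))=0$; - for $j\notin I(t_n)$, $x_j(t_n)$ is a point with $S_j(x_j(t_n))=S_j(x_j(t_n^-))+\sum_{i\in I(t_n),\,i\ne j}\Delta_{ij}$. Initial states are assumed to satisfy $S_i(x_i(0))\in[0,\theta_i)$ for all $i$. The network is cooperative if $\Delta_{ij}\ge 0$ for all $i\ne j$. A cooperative network is large enough if $\sqrt m\ge 1+\frac{\max_i\theta_i}{\min_{i\ne j}\Delta_{ij}}$; in particular this requires $\Delta_{ij}>0$ for all $i\ne j$. The grand coalition is exhibited at $t_n$ if $I(t_n)=\{1,\dots,m\}$. *)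

From Stdlib Require Import Reals List Arith Bool.
Import ListNotations.
Open Scope bool_scope.
Open Scope R_scope.

Definition Rmin_seq (l : list R) : R :=
  match l with nil => 0 | a :: t => fold_right Rmin a t end.
Definition Rmax_seq (l : list R) : R :=
  match l with nil => 0 | a :: t => fold_right Rmax a t end.

(* Cells are indexed by 0, ..., m-1. *)
Definition cells (m : nat) : list nat := seq 0 m.

Definition min_offdiag (m : nat) (Delta : nat -> nat -> R) : R :=
  Rmin_seq (flat_map (fun i => map (fun j => Delta i j)
              (filter (fun j => negb (Nat.eqb i j)) (cells m))) (cells m)).

Definition right_cont_at (f : R -> R) (a : R) : Prop :=
  forall eps, 0 < eps -> exists d, 0 < d /\
    forall t, a <= t < a + d -> Rabs (f t - f a) < eps.

Definition left_lim (f : R -> R) (a L : R) : Prop :=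
  forall eps, 0 < eps -> exists d, 0 < d /\
    forall t, a - d < t < a -> Rabs (f t - L) < eps.

Definition Rgeb (a b : R) : bool := if Rle_dec b a then true else false.

Definition mem_nat (j : nat) (l : list nat) : bool := existsb (Nat.eqb j) l.

(* Given the layers I_0, ..., I_{p-1} (as lists), the next layer I_p:
   cells j not in earlier layers with
   S_j(t^-) + sum_{k<p} sum_{i in I_k} Delta_ij >= theta_j.
   (For p = 0 this is exactly I_0 = {i | S_i(t^-) >= theta_i}.) *)
Definition next_layer (m : nat) (Delta : nat -> nat -> R) (theta Sminus : nat -> R)
    (pre : list (list nat)) : list nat :=
  filter (fun j => negb (mem_nat j (concat pre)) &&
             Rgeb (Sminus j + fold_right Rplus 0 (map (fun i => Delta i j) (concat pre)))
                  (theta j))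
         (cells m).

(* layers m Delta theta Sminus p = [I_0; ...; I_{p-1}] *)
Fixpoint layers (m : nat) (Delta : nat -> nat -> R) (theta Sminus : nat -> R) (p : nat)
    : list (list nat) :=
  match p with
  | O => nil
  | S p' => let pre := layers m Delta theta Sminus p' in
            pre ++ [next_layer m Delta theta Sminus pre]
  end.

(* j belongs to the coalition I = union_p I_p, computed from the left limits Sminus. *)
Definition in_coalition (m : nat) (Delta : nat -> nat -> R) (theta Sminus : nat -> R)
    (j : nat) : Prop :=
  exists p, In j (concat (layers m Delta theta Sminus p)).

From Stdlib Require Import Reals List Lra Lia.
Open Scope R_scope.

(* Before the first spike every cell starts at level 0 and climbs
   with a rate that is positive, hence its level stays in [0, theta_i], where the
   rate lies between rmin_i and rmax_i.  Comparing with affine functions (mean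
   value theorem plus one-sided limits) gives
        rmin_i * t1 <= S_i(t1^-) <= rmax_i * t1       for every cell i.
   The cell i0 that fires at t1 thus forces t1 >= theta_i0 / rmax_i0 >= A, where
   A = min_i theta_i/rmax_i; the similarity inequality A/B >= 1 - D/M (B the max
   of theta_i/rmin_i, D the least weight, M the largest goal) then yields
   theta_j <= rmin_j * t1 + D <= S_j(t1^-) + Delta_{i0 j} for every cell j, so
   the kick of i0 alone pushes every other cell over its goal: j lies in the
   coalition layer I_0 or I_1. *)

(* g(r) -> L as r -> 0^+; both right-continuity and left limits reduce to it. *)
Definition lim_right0 (g : R -> R) (L : R) : Prop :=
  forall eps, 0 < eps -> exists d, 0 < d /\
    forall r, 0 < r < d -> Rabs (g r - L) < eps.

Lemma lim_right0_of_right_cont (f : R -> R) (a : R) :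
  right_cont_at f a -> lim_right0 (fun r => f (a + r)) (f a).
Proof.
  intros Hf eps Heps. destruct (Hf eps Heps) as [d [Hd Hclose]].
  exists d; split; [exact Hd|]. intros r Hr. apply Hclose. lra.
Qed.

Lemma lim_right0_of_left_lim (f : R -> R) (b L : R) :
  left_lim f b L -> lim_right0 (fun r => f (b - r)) L.
Proof.
  intros Hf eps Heps. destruct (Hf eps Heps) as [d [Hd Hclose]].
  exists d; split; [exact Hd|]. intros r Hr. apply Hclose. lra.
Qed.

Lemma lim_right0_opp (g : R -> R) (L : R) :
  lim_right0 g L -> lim_right0 (fun r => - g r) (- L).
Proof.
  intros Hg eps Heps. destruct (Hg eps Heps) as [d [Hd Hclose]].
  exists d; split; [exact Hd|]. intros r Hr.
  replace (- g r - - L) with (- (g r - L)) by ring. rewrite Rabs_Ropp. auto.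
Qed.

Lemma lim_right0_le_affine (g : R -> R) (L K c b : R) :
  lim_right0 g L -> 0 < b -> (forall r, 0 < r < b -> g r <= K + c * r) -> L <= K.
Proof.
  intros Hg Hb Hbound. apply Rnot_lt_le; intro HKL.
  set (eps := (L - K) / 2).
  destruct (Hg eps ltac:(unfold eps; lra)) as [d [Hd Hclose]].
  pose proof (Rabs_pos c) as Hc0. pose proof (Rle_abs c) as Hc1.
  set (q := eps / (Rabs c + 1)).
  assert (Hq : q * (Rabs c + 1) = eps) by (unfold q; field; lra).
  assert (Hq0 : 0 < q) by (unfold q, eps; apply Rdiv_lt_0_compat; lra).
  (* a point r close enough to 0 that both |g r - L| < eps and c r < eps *)
  set (r := Rmin (Rmin d b) q / 2).
  assert (Hmin : 0 < Rmin (Rmin d b) q) by (repeat apply Rmin_glb_lt; lra).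
  pose proof (Rmin_l (Rmin d b) q). pose proof (Rmin_r (Rmin d b) q).
  pose proof (Rmin_l d b). pose proof (Rmin_r d b).
  assert (Hr : 0 < r < d /\ r < b /\ r < q) by (unfold r; lra).
  assert (Hcr : c * r < eps) by nra.
  destruct (Rabs_def2 _ _ (Hclose r ltac:(lra))) as [_ Hnear].
  pose proof (Hbound r ltac:(lra)). unfold eps in *. lra.
Qed.

Lemma lim_right0_ge_affine (g : R -> R) (L K c b : R) :
  lim_right0 g L -> 0 < b -> (forall r, 0 < r < b -> K + c * r <= g r) -> K <= L.
Proof.
  intros Hg Hb Hbound.
  enough (- L <= - K) by lra.
  apply (lim_right0_le_affine (fun r => - g r) (- L) (- K) (- c) b
           (lim_right0_opp g L Hg) Hb).
  intros r Hr. specialize (Hbound r Hr). lra.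
Qed.

Lemma affine_lower_bound (f f' : R -> R) (c a b : R) :
  right_cont_at f a ->
  (forall t, a < t < b -> derivable_pt_lim f t (f' t)) ->
  (forall t, a < t < b -> c <= f' t) ->
  forall t, a < t < b -> f a + c * (t - a) <= f t.
Proof.
  intros Hcont Hder Hc t Ht.
  enough (f a <= f t - c * (t - a)) by lra.
  apply (lim_right0_le_affine _ _ _ c (t - a) (lim_right0_of_right_cont f a Hcont));
    [lra|].
  intros r Hr.
  destruct (MVT_cor2 f f' (a + r) t ltac:(lra)) as [xi [Hmvt Hxi]].
  { intros s Hs. apply Hder. lra. }
  assert (c * (t - (a + r)) <= f' xi * (t - (a + r)))
    by (apply Rmult_le_compat_r; [lra | apply Hc; lra]).
  lra.
Qed.

Lemma affine_upper_bound (f f' : R -> R) (c a b : R) :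
  right_cont_at f a ->
  (forall t, a < t < b -> derivable_pt_lim f t (f' t)) ->
  (forall t, a < t < b -> f' t <= c) ->
  forall t, a < t < b -> f t <= f a + c * (t - a).
Proof.
  intros Hcont Hder Hc t Ht.
  enough (f t - c * (t - a) <= f a) by lra.
  apply (lim_right0_ge_affine _ _ _ c (t - a) (lim_right0_of_right_cont f a Hcont));
    [lra|].
  intros r Hr.
  destruct (MVT_cor2 f f' (a + r) t ltac:(lra)) as [xi [Hmvt Hxi]].
  { intros s Hs. apply Hder. lra. }
  assert (f' xi * (t - (a + r)) <= c * (t - (a + r)))
    by (apply Rmult_le_compat_r; [lra | apply Hc; lra]).
  lra.
Qed.

Lemma left_lim_ge_affine (f : R -> R) (a b K c L : R) :
  left_lim f b L -> a < b ->
  (forall t, a < t < b -> K + c * (t - a) <= f t) -> K + c * (b - a) <= L.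
Proof.
  intros Hlim Hab Hbound.
  apply (lim_right0_ge_affine _ _ _ (- c) (b - a) (lim_right0_of_left_lim f b L Hlim));
    [lra|].
  intros r Hr. specialize (Hbound (b - r) ltac:(lra)). lra.
Qed.

Lemma left_lim_le_affine (f : R -> R) (a b K c L : R) :
  left_lim f b L -> a < b ->
  (forall t, a < t < b -> f t <= K + c * (t - a)) -> L <= K + c * (b - a).
Proof.
  intros Hlim Hab Hbound.
  apply (lim_right0_le_affine _ _ _ (- c) (b - a) (lim_right0_of_left_lim f b L Hlim));
    [lra|].
  intros r Hr. specialize (Hbound (b - r) ltac:(lra)). lra.
Qed.

(* A single cell before its first spike at b: starting at level 0 with positive
   rate, its level stays in [0, theta]; if there the rate lies in [lo, hi], the
   left limit L of the level at b lies in [lo b, hi b]. *)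
Lemma cell_level_bounds (f rate : R -> R) (theta lo hi b L : R) :
  0 < b -> f 0 = 0 -> right_cont_at f 0 ->
  (forall t, 0 < t < b -> derivable_pt_lim f t (rate t)) ->
  (forall t, 0 < t < b -> 0 < rate t) ->
  (forall t, 0 <= t < b -> f t < theta) ->
  (forall t, 0 < t < b -> 0 <= f t <= theta -> lo <= rate t <= hi) ->
  left_lim f b L -> lo * b <= L <= hi * b.
Proof.
  intros Hb Hf0 Hcont Hder Hpos Hbelow Hrates Hlim.
  assert (Hnonneg : forall t, 0 < t < b -> 0 <= f t).
  { intros t Ht.
    pose proof (affine_lower_bound f rate 0 0 b Hcont Hder
                  ltac:(intros s Hs; apply Rlt_le, Hpos, Hs) t Ht).
    lra. }
  assert (Hrange : forall t, 0 < t < b -> lo <= rate t <= hi).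
  { intros t Ht. apply Hrates; [exact Ht|].
    pose proof (Hnonneg t Ht). pose proof (Hbelow t ltac:(lra)). lra. }
  replace (lo * b) with (f 0 + lo * (b - 0)) by (rewrite Hf0; ring).
  replace (hi * b) with (f 0 + hi * (b - 0)) by (rewrite Hf0; ring).
  split.
  - apply (left_lim_ge_affine f); [exact Hlim | exact Hb |].
    apply (affine_lower_bound f rate); auto.
    intros t Ht. apply Hrange, Ht.
  - apply (left_lim_le_affine f); [exact Hlim | exact Hb |].
    apply (affine_upper_bound f rate); auto.
    intros t Ht. apply Hrange, Ht.
Qed.

Lemma fold_Rmin_le (a : R) (l : list R) (y : R) :
  In y (a :: l) -> fold_right Rmin a l <= y.
Proof.
  induction l as [|b l IH]; simpl; intros Hy.
  - destruct Hy as [<- | []]. lra.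
  - destruct Hy as [<- | [<- | Hy]].
    + eapply Rle_trans; [apply Rmin_r | apply IH; left; reflexivity].
    + apply Rmin_l.
    + eapply Rle_trans; [apply Rmin_r | apply IH; right; exact Hy].
Qed.

Lemma fold_Rmax_ge (a : R) (l : list R) (y : R) :
  In y (a :: l) -> y <= fold_right Rmax a l.
Proof.
  induction l as [|b l IH]; simpl; intros Hy.
  - destruct Hy as [<- | []]. lra.
  - destruct Hy as [<- | [<- | Hy]].
    + eapply Rle_trans; [apply IH; left; reflexivity | apply Rmax_r].
    + apply Rmax_l.
    + eapply Rle_trans; [apply IH; right; exact Hy | apply Rmax_r].
Qed.

Lemma Rmin_seq_le (l : list R) (y : R) : In y l -> Rmin_seq l <= y.
Proof. destruct l as [|a l]; [intros []|]. apply fold_Rmin_le. Qed.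

Lemma Rmax_seq_ge (l : list R) (y : R) : In y l -> y <= Rmax_seq l.
Proof. destruct l as [|a l]; [intros []|]. apply fold_Rmax_ge. Qed.

Lemma Rmin_seq_nonneg (l : list R) : (forall y, In y l -> 0 <= y) -> 0 <= Rmin_seq l.
Proof.
  destruct l as [|a l]; simpl; [lra|]. intros Hl.
  induction l as [|b l IH]; simpl; [apply Hl; left; reflexivity|].
  apply Rmin_glb; [apply Hl; right; left; reflexivity|].
  apply IH. intros y [<- | Hy]; apply Hl; [left | right; right]; auto.
Qed.

Lemma in_cells (m i : nat) : (i < m)%nat -> In i (cells m).
Proof. intros Hi. apply in_seq. lia. Qed.

Lemma cells_lt (m i : nat) : In i (cells m) -> (i < m)%nat.
Proof. unfold cells. rewrite in_seq. lia. Qed.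

Lemma min_offdiag_le (m : nat) (Delta : nat -> nat -> R) (i j : nat) :
  (i < m)%nat -> (j < m)%nat -> i <> j -> min_offdiag m Delta <= Delta i j.
Proof.
  intros Hi Hj Hij. apply Rmin_seq_le, in_flat_map.
  exists i. split; [apply in_cells, Hi|].
  apply in_map, filter_In. split; [apply in_cells, Hj|].
  destruct (Nat.eqb_spec i j); [contradiction | reflexivity].
Qed.

Lemma min_offdiag_nonneg (m : nat) (Delta : nat -> nat -> R) :
  (forall i j, (i < m)%nat -> (j < m)%nat -> i <> j -> 0 <= Delta i j) ->
  0 <= min_offdiag m Delta.
Proof.
  intros HD. apply Rmin_seq_nonneg. intros y Hy.
  apply in_flat_map in Hy. destruct Hy as [i [Hi Hy]].
  apply in_map_iff in Hy. destruct Hy as [j [<- Hj]].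
  apply filter_In in Hj. destruct Hj as [Hj Hneq].
  apply HD; [apply cells_lt, Hi | apply cells_lt, Hj |].
  intros <-. rewrite Nat.eqb_refl in Hneq. discriminate.
Qed.

Lemma spike_time_ge (th0 r0 t : R) :
  0 < th0 -> 0 <= t -> th0 <= r0 * t -> th0 / r0 <= t.
Proof.
  intros Hth Ht Hreach.
  assert (Hr0 : 0 < r0) by (destruct (Rle_lt_dec r0 0); [nra | assumption]).
  apply Rmult_le_reg_r with r0; [exact Hr0|].
  replace (th0 / r0 * r0) with th0 by (field; lra). lra.
Qed.

(* The similarity inequality A/B >= 1 - D/M: once t >= A, a cell with goal th
   <= M and slowest rate r (th/r <= B) has risen to within D of its goal. *)
Lemma similarity_gap (A B D M th r t : R) :
  0 <= D -> 0 < r -> 0 < th <= M -> th / r <= B ->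
  A / B >= 1 - D / M -> 0 <= t -> A <= t -> th <= r * t + D.
Proof.
  intros HD Hr Hth HthB Hsim Ht HAt.
  assert (HB : 0 < B) by (apply Rlt_le_trans with (th / r);
                          [apply Rdiv_lt_0_compat |]; lra).
  assert (HM : 0 < M) by lra.
  set (w := D / M) in *.
  assert (HBA : B * (1 - w) <= A).
  { apply Rge_le in Hsim. apply Rmult_le_compat_l with (r := B) in Hsim; [|lra].
    replace (B * (A / B)) with A in Hsim by (field; lra). exact Hsim. }
  assert (Hthr : th <= B * r).
  { apply Rmult_le_compat_r with (r := r) in HthB; [|lra].
    replace (th / r * r) with th in HthB by (field; lra). exact HthB. }
  assert (HDw : D = w * M) by (unfold w; field; lra).
  destruct (Rle_lt_dec 0 (1 - w)) as [Hw | Hw].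
  - (* th - D <= th (1 - w) <= r B (1 - w) <= r A <= r t *)
    assert (th * (1 - w) <= B * r * (1 - w)) by (apply Rmult_le_compat_r; lra).
    assert (r * (B * (1 - w)) <= r * t) by (apply Rmult_le_compat_l; lra).
    assert (0 <= w) by nra.
    assert (th * w <= M * w) by (apply Rmult_le_compat_r; lra).
    nra.
  - (* here D > M >= th *)
    assert (0 <= r * t) by (apply Rmult_le_pos; lra). nra.
Qed.

Lemma sum_nonneg (F : nat -> R) (l : list nat) :
  (forall i, In i l -> 0 <= F i) -> 0 <= fold_right Rplus 0 (map F l).
Proof.
  induction l as [|a l IH]; simpl; intros Hl; [lra|].
  pose proof (Hl a (or_introl eq_refl)).
  assert (0 <= fold_right Rplus 0 (map F l)) by (apply IH; auto). lra.
Qed.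

Lemma sum_ge_member (F : nat -> R) (l : list nat) (i0 : nat) :
  (forall i, In i l -> 0 <= F i) -> In i0 l -> F i0 <= fold_right Rplus 0 (map F l).
Proof.
  induction l as [|a l IH]; simpl; intros Hl Hi0; [destruct Hi0|].
  destruct Hi0 as [<- | Hi0].
  - assert (0 <= fold_right Rplus 0 (map F l)) by (apply sum_nonneg; auto). lra.
  - pose proof (Hl a (or_introl eq_refl)).
    assert (F i0 <= fold_right Rplus 0 (map F l)) by (apply IH; auto). lra.
Qed.

Lemma Rgeb_true (a b : R) : b <= a -> Rgeb a b = true.
Proof. unfold Rgeb. destruct (Rle_dec b a); [reflexivity | contradiction]. Qed.

Lemma mem_nat_false (j : nat) (l : list nat) : ~ In j l -> mem_nat j l = false.
Proof.
  intros Hj. unfold mem_nat. destruct (existsb (Nat.eqb j) l) eqn:E; [|reflexivity].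
  apply existsb_exists in E. destruct E as [y [Hy Hjy]].
  apply Nat.eqb_eq in Hjy. subst. contradiction.
Qed.

(* If cell i0 reaches its goal, then every cell j whose level plus the kick
   Delta_{i0 j} reaches its goal belongs to the coalition (layer I_0 or I_1). *)
Lemma in_coalition_of_kick (m : nat) (Delta : nat -> nat -> R)
    (theta Sminus : nat -> R) (i0 j : nat) :
  (forall i, (i < m)%nat -> i <> j -> 0 <= Delta i j) ->
  (i0 < m)%nat -> theta i0 <= Sminus i0 -> (j < m)%nat ->
  (i0 <> j -> theta j <= Sminus j + Delta i0 j) ->
  in_coalition m Delta theta Sminus j.
Proof.
  intros HD Hi0 Hfire Hj Hkick.
  set (I0 := next_layer m Delta theta Sminus nil).
  assert (HI0 : forall k, In k I0 <-> (k < m)%nat /\ theta k <= Sminus k).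
  { intros k. unfold I0, next_layer. rewrite filter_In. simpl. rewrite Rplus_0_r.
    split.
    - intros [Hk Hge]. split; [apply cells_lt, Hk|].
      unfold Rgeb in Hge. destruct (Rle_dec (theta k) (Sminus k)); [assumption | discriminate].
    - intros [Hk Hge]. split; [apply in_cells, Hk | apply Rgeb_true, Hge]. }
  destruct (in_dec Nat.eq_dec j I0) as [HjI0 | HjI0].
  - exists 1%nat. simpl. rewrite app_nil_r. exact HjI0.
  - exists 2%nat.
    change (In j (I0 ++ (next_layer m Delta theta Sminus (I0 :: nil) ++ nil))).
    apply in_or_app. right. apply in_or_app. left.
    unfold next_layer. apply filter_In. split; [apply in_cells, Hj|].
    simpl. rewrite app_nil_r, (mem_nat_false j I0 HjI0). simpl. apply Rgeb_true.
    assert (Hij : i0 <> j) by (intros <-; apply HjI0, HI0; auto).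
    assert (Delta i0 j <= fold_right Rplus 0 (map (fun i => Delta i j) I0)).
    { apply (sum_ge_member (fun i => Delta i j)); [|apply HI0; auto].
      intros i Hi. apply HD; [apply HI0, Hi |]. intros <-. contradiction. }
    specialize (Hkick Hij). lra.
Qed.

Theorem mainTheorem6
  (m : nat) (Hm : (2 <= m)%nat)
  (X : nat -> Type)
  (S : forall i, X i -> R)            (* satisfaction levels S_i *)
  (rate : forall i, X i -> R)         (* rate i x = grad S_i(x) . f_i(x) *)
  (theta v : nat -> R)
  (Delta : nat -> nat -> R)
  (Htheta : forall i, (i < m)%nat -> 0 < theta i)
  (Hv : forall i, (i < m)%nat -> 0 < v i)
  (Hrate : forall i, (i < m)%nat -> forall x : X i, S i x < theta i -> rate i x > v i)
  (HDelta : forall i j, (i < m)%nat -> (j < m)%nat -> i <> j -> 0 < Delta i j)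
  (* rmax i / rmin i = max / min of rate i over S_i^{-1}([0, theta_i]) *)
  (rmax rmin : nat -> R)
  (Hrmax : forall i, (i < m)%nat ->
     (exists x : X i, 0 <= S i x <= theta i /\ rate i x = rmax i) /\
     (forall x : X i, 0 <= S i x <= theta i -> rate i x <= rmax i))
  (Hrmin : forall i, (i < m)%nat ->
     (exists x : X i, 0 <= S i x <= theta i /\ rate i x = rmin i) /\
     (forall x : X i, 0 <= S i x <= theta i -> rmin i <= rate i x))
  (Hrmin_pos : forall i, (i < m)%nat -> 0 < rmin i)
  (* similarity inequality *)
  (Hsim : Rmin_seq (map (fun i => theta i / rmax i) (cells m))
            / Rmax_seq (map (fun i => theta i / rmin i) (cells m))
          >= 1 - min_offdiag m Delta / Rmax_seq (map theta (cells m)))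
  (* trajectory on [0, t1): no spike, evolution by the flow *)
  (x : forall i, R -> X i) (t1 : R) (Ht1 : 0 < t1)
  (Hinit : forall i, (i < m)%nat -> S i (x i 0) = 0)
  (Hcont0 : forall i, (i < m)%nat -> right_cont_at (fun t => S i (x i t)) 0)
  (Hflow : forall i, (i < m)%nat -> forall t, 0 < t < t1 ->
     derivable_pt_lim (fun s => S i (x i s)) t (rate i (x i t)))
  (Hnospike : forall i, (i < m)%nat -> forall t, 0 <= t < t1 -> S i (x i t) < theta i)
  (* left limits S_i(x_i(t1^-)) *)
  (Sminus : nat -> R)
  (Hlim : forall i, (i < m)%nat -> left_lim (fun t => S i (x i t)) t1 (Sminus i))
  (* t1 is a spiking instant: I_0(t1) nonempty *)
  (Hspike : exists i, (i < m)%nat /\ Sminus i >= theta i) :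
  forall j, (j < m)%nat -> in_coalition m Delta theta Sminus j.
Proof.
  intros j Hj. destruct Hspike as [i0 [Hi0 Hfire]].
  assert (Hlevel : forall i, (i < m)%nat -> rmin i * t1 <= Sminus i <= rmax i * t1).
  { intros i Hi.
    apply (cell_level_bounds (fun t => S i (x i t)) (fun t => rate i (x i t)) (theta i));
      auto.
    - intros t Ht. pose proof (Hrate i Hi _ (Hnospike i Hi t ltac:(lra))).
      pose proof (Hv i Hi). lra.
    - intros t _ Hs. split; [apply (proj2 (Hrmin i Hi)) | apply (proj2 (Hrmax i Hi))];
        exact Hs. }
  assert (HD : forall i k, (i < m)%nat -> (k < m)%nat -> i <> k -> 0 <= Delta i k)
    by (intros; apply Rlt_le, HDelta; assumption).
  apply (in_coalition_of_kick m Delta theta Sminus i0 j); auto; [lra|].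
  intros Hij.
  (* the firing cell i0 shows that t1 is at least min_i theta_i / rmax_i *)
  assert (Ht1A : Rmin_seq (map (fun i => theta i / rmax i) (cells m)) <= t1).
  { eapply Rle_trans; [apply Rmin_seq_le, (in_map (fun i => theta i / rmax i)), in_cells, Hi0|].
    apply spike_time_ge; [apply Htheta, Hi0 | lra | pose proof (Hlevel i0 Hi0); lra]. }
  (* by the similarity inequality, cell j ends within min Delta of its goal *)
  assert (Hgap : theta j <= rmin j * t1 + min_offdiag m Delta).
  { apply (similarity_gap _ _ _ _ _ _ _ (min_offdiag_nonneg m Delta HD) (Hrmin_pos j Hj)
             ltac:(split; [apply Htheta, Hj
                          | apply Rmax_seq_ge, (in_map theta), in_cells, Hj])
             ltac:(apply Rmax_seq_ge, (in_map (fun i => theta i / rmin i)), in_cells, Hj)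
             Hsim); lra. }
  pose proof (min_offdiag_le m Delta i0 j Hi0 Hj Hij). pose proof (Hlevel j Hj). lra.
Qed.
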